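(* Let $\Gamma=(V,E)$ be a finite connected undirected graph and let $(u_{ij})$ be the generators of $C(G_{aut}^+(\Gamma))$. Let $i,j,k,l\in V$ with $d(i,k)=d(j,l)=m$, let $p\neq j$ be a vertex with $d(p,l)=m$, and let $q$ be a vertex with $d(q,l)=s$ and $d(j,q)\neq d(q,p)$. Then $$u_{ij}\Big(\sum_{t\in V:\ d(t,j)=d(t,p)=m,\ d(t,q)=s}u_{kt}\Big)u_{ip}=0.$$ In particular, if $l$ is the only vertex $t$ satisfying $d(t,q)=s$, $d(t,j)=m$ and $d(t,p)=m$, then $u_{ij}u_{kl}u_{ip}=0$.
   Context: $\Gamma$ is a finite simple connected undirected graph on $V=\{1,\dots,n\}$, $d$ the graph distance. $C(G_{aut}^+(\Gamma))$ is the universal unital $C^*$-algebra generated by $u_{ij}$, $1\le i,j\le n$, with relations: (R1) $u_{ij}=u_{ij}^*=u_{ij}^2$; (R2) $\sum_{l} u_{il}=1=\sum_{l} u_{li}$ for all $i$; (R3) $u_{ij}u_{kl}=u_{kl}u_{ij}=0$ whenever exactly one of $(i,k)\in E$, $(j,l)\in E$ holds. *)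

From Stdlib Require Import Reals.
From mathcomp Require Import all_boot.

Set Implicit Arguments.
Unset Strict Implicit.
Unset Printing Implicit Defensive.

Local Open Scope R_scope.
Record Cpx := MkC { Re : R ; Im : R }.

Definition C0 : Cpx := MkC 0 0.
Definition C1 : Cpx := MkC 1 0.
Definition Cadd (a b : Cpx) : Cpx := MkC (Re a + Re b) (Im a + Im b).
Definition Cmul (a b : Cpx) : Cpx :=
  MkC (Re a * Re b - Im a * Im b) (Re a * Im b + Im a * Re b).
Definition Cconj (a : Cpx) : Cpx := MkC (Re a) (- Im a).
Definition Cabs (a : Cpx) : R := sqrt (Re a * Re a + Im a * Im a).

Record CStarAlgebra := {
  car :> Type;
  cz : car;
  co : car;
  cadd : car -> car -> car;
  copp : car -> car;
  cmul : car -> car -> car;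
  csc : Cpx -> car -> car;
  cstar : car -> car;
  cnorm : car -> R;
  caddA : forall x y z, cadd x (cadd y z) = cadd (cadd x y) z;
  caddC : forall x y, cadd x y = cadd y x;
  cadd0 : forall x, cadd cz x = x;
  caddN : forall x, cadd (copp x) x = cz;
  cscDr : forall c x y, csc c (cadd x y) = cadd (csc c x) (csc c y);
  cscDl : forall c d x, csc (Cadd c d) x = cadd (csc c x) (csc d x);
  cscA : forall c d x, csc (Cmul c d) x = csc c (csc d x);
  csc1 : forall x, csc C1 x = x;
  cmulA : forall x y z, cmul x (cmul y z) = cmul (cmul x y) z;
  cmul1l : forall x, cmul co x = x;
  cmul1r : forall x, cmul x co = x;
  cmulDl : forall x y z, cmul (cadd x y) z = cadd (cmul x z) (cmul y z);
  cmulDr : forall x y z, cmul x (cadd y z) = cadd (cmul x y) (cmul x z);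
  cmulZl : forall c x y, cmul (csc c x) y = csc c (cmul x y);
  cmulZr : forall c x y, cmul x (csc c y) = csc c (cmul x y);
  cstarK : forall x, cstar (cstar x) = x;
  cstarD : forall x y, cstar (cadd x y) = cadd (cstar x) (cstar y);
  cstarM : forall x y, cstar (cmul x y) = cmul (cstar y) (cstar x);
  cstarZ : forall c x, cstar (csc c x) = csc (Cconj c) (cstar x);
  cnorm_eq0 : forall x, cnorm x = 0 -> x = cz;
  cnormD : forall x y, (cnorm (cadd x y) <= cnorm x + cnorm y);
  cnormZ : forall c x, cnorm (csc c x) = (Cabs c * cnorm x);
  cnormM : forall x y, (cnorm (cmul x y) <= cnorm x * cnorm y);
  cnorm_cstar : forall x, cnorm (cmul (cstar x) x) = (cnorm x * cnorm x);
  ccomplete : forall s : nat -> car,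
    (forall eps : R, (0 < eps) -> exists N : nat, forall n m : nat,
        (N <= n)%coq_nat -> (N <= m)%coq_nat ->
        (cnorm (cadd (s n) (copp (s m))) < eps)) ->
    exists L : car, forall eps : R, (0 < eps) -> exists N : nat,
        forall n : nat, (N <= n)%coq_nat -> (cnorm (cadd (s n) (copp L)) < eps)
}.

Local Close Scope R_scope.
Fixpoint walk (T : finType) (e : rel T) (k : nat) (x y : T) : bool :=
  match k with
  | 0 => x == y
  | k'.+1 => [exists z, e x z && walk e k' z y]
  end.

(* graph distance: least k with a walk of length k from x to y
   (for connected graphs this is < #|T|, so searching 0..#|T|-1 suffices). *)
Definition gdist (T : finType) (e : rel T) (x y : T) : nat :=
  find (fun k => walk e k x y) (iota 0 #|T|).

(* The three defining relations of C(G_aut^+(Gamma)) *)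
Definition qaut_rel (T : finType) (e : rel T) (A : CStarAlgebra) (u : T -> T -> A) : Prop :=
  (forall i j, u i j = cstar (u i j) /\ u i j = cmul (u i j) (u i j)) /\
  (forall i, \big[@cadd A / cz A]_(l : T) u i l = co A /\
             \big[@cadd A / cz A]_(l : T) u l i = co A) /\
  (forall i j k l, e i k != e j l ->
     cmul (u i j) (u k l) = cz A /\ cmul (u k l) (u i j) = cz A).

(* The proof rests on "distance preservation": u_ab u_cd = 0 whenever
   d(a,c) <> d(b,d).  It is obtained by induction on walk lengths from the
   adjacency relation (R3) and the orthogonality of the projections in a row
   of u.  That orthogonality (projections summing to 1 are mutually
   orthogonal) is proved from the C*-axioms alone, through an extreme-point
   property of projections in the unit ball (section ExtremePoint).

   With distance preservation, only the t with d(t,j) = d(t,p) = d(i,k)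
   contribute to the sum, and the sum over the level set d(t,q) = s is
   killed by inserting 1 = sum_a u_aq: it collapses to sum_a u_ij u_aq u_ip,
   every term of which vanishes because d(j,q) <> d(q,p). *)

From Pilot Require Import Defs.
From Stdlib Require Import Reals Lra.
From HB Require Import structures.
From mathcomp Require Import all_boot.

Set Implicit Arguments.
Unset Strict Implicit.
Unset Printing Implicit Defensive.

Local Infix "⊕" := cadd (at level 50, left associativity).
Local Infix "⊗" := cmul (at level 40, left associativity).

Lemma Cpx_eq (a b c d : R) : a = c -> b = d -> MkC a b = MkC c d.
Proof. by move=> -> ->. Qed.

Ltac cpx_eq := rewrite /Cconj /Cmul /Cadd /Defs.C1 /Defs.C0 /=;
  apply: Cpx_eq; field.

Definition Chalf : Cpx := MkC (/ 2) 0.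

Lemma Cabs_real (r : R) : Cabs (MkC r 0) = Rabs r.
Proof. by rewrite /Cabs /= Rmult_0_l Rplus_0_r sqrt_Rsqr_abs. Qed.

Section RealFacts.
Local Open Scope R_scope.

Lemma pow2_mul_bounded (a b : R) :
  0 <= a -> (forall n, 2 ^ n * a <= b) -> a = 0.
Proof.
move=> a0 bounded; case: (Req_dec a 0) => // a_nz.
have a_pos : 0 < a by lra.
have two_gt1 : Rabs 2 > 1 by rewrite Rabs_right; lra.
have [N hN] := Pow_x_infinity 2 two_gt1 ((b + 1) / a).
have := hN N (le_n N); rewrite Rabs_right; last by apply: Rle_ge; apply: pow_le; lra.
move=> /Rge_le /(Rmult_le_compat_r a _ _ (Rlt_le _ _ a_pos)).
have -> : (b + 1) / a * a = b + 1 by field; lra.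
by have := bounded N; lra.
Qed.
End RealFacts.

Section AlgebraBasics.
Variable A : CStarAlgebra.
Implicit Types x y z : A.

Lemma cadd0r x : x ⊕ cz A = x.
Proof. by rewrite caddC cadd0. Qed.

Lemma caddI x y z : x ⊕ y = x ⊕ z -> y = z.
Proof.
move=> h; have := congr1 (cadd (copp x)) h.
by rewrite !caddA caddN !cadd0.
Qed.

Lemma cadd_self_eq0 y : y = y ⊕ y -> y = cz A.
Proof. by move=> h; apply: (@caddI y); rewrite cadd0r -h. Qed.

Lemma cmulr0 x : x ⊗ cz A = cz A.
Proof. by apply: cadd_self_eq0; rewrite -cmulDr cadd0. Qed.

Lemma cmul0r x : cz A ⊗ x = cz A.
Proof. by apply: cadd_self_eq0; rewrite -cmulDl cadd0. Qed.

Lemma csc0 x : csc Defs.C0 x = cz A.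
Proof. by apply: cadd_self_eq0; rewrite -cscDl; congr csc; cpx_eq. Qed.

Lemma coppE x : copp x = csc (MkC (-1) 0) x.
Proof.
apply: (@caddI x); rewrite caddC caddN -{1}(csc1 x) -cscDl -(csc0 x).
by congr csc; cpx_eq.
Qed.

Lemma cadd4 x y z (w : A) : x ⊕ y ⊕ (z ⊕ w) = x ⊕ z ⊕ (y ⊕ w).
Proof. by rewrite -!caddA (caddA y) (caddC y) -caddA. Qed.

Lemma cstar1 : cstar (co A) = co A.
Proof.
have e := cstarM (cstar (co A)) (co A).
by rewrite cmul1r cstarK cmul1r in e; rewrite -e.
Qed.

Lemma compl_proj (P : A) : cstar P = P -> P ⊗ P = P ->
  cstar (co A ⊕ copp P) = co A ⊕ copp P /\
  (co A ⊕ copp P) ⊗ (co A ⊕ copp P) = co A ⊕ copp P.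
Proof.
move=> sa idem; rewrite coppE; split.
  by rewrite cstarD cstarZ cstar1 sa; congr (_ ⊕ csc _ _); cpx_eq.
rewrite cmulDl cmul1l cmulDr cmul1r cmulZl cmulZr idem -cscA -caddA.
by rewrite [X in co A ⊕ X]caddA -!cscDl; congr (_ ⊕ csc _ _); cpx_eq.
Qed.

Local Open Scope R_scope.

Lemma cnorm_real_scale (r : R) x : cnorm (csc (MkC r 0) x) = Rabs r * cnorm x.
Proof. by rewrite cnormZ Cabs_real. Qed.

Lemma cnorm0 : cnorm (cz A) = 0.
Proof. by rewrite -(csc0 (cz A)) cnorm_real_scale Rabs_R0 Rmult_0_l. Qed.

Lemma cnormN x : cnorm (copp x) = cnorm x.
Proof. by rewrite coppE cnorm_real_scale Rabs_Ropp Rabs_R1 Rmult_1_l. Qed.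

Lemma cnorm_ge0 x : 0 <= cnorm x.
Proof. by have := cnormD (copp x) x; rewrite caddN cnorm0 cnormN; lra. Qed.

Lemma cstar_mul_eq0 x : cstar x ⊗ x = cz A -> x = cz A.
Proof.
move=> h; apply: cnorm_eq0; have := cnorm_cstar x; rewrite h cnorm0.
by have := cnorm_ge0 x; nra.
Qed.

Lemma proj_norm_le1 x : cstar x = x -> x ⊗ x = x -> cnorm x <= 1.
Proof.
move=> sa idem; have := cnorm_cstar x; rewrite sa idem.
by have := cnorm_ge0 x; nra.
Qed.

Lemma cnorm_mul_le1 x y : cnorm x <= 1 -> cnorm y <= 1 -> cnorm (x ⊗ y) <= 1.
Proof.
by move=> hx hy; have := cnormM x y; have := cnorm_ge0 x; have := cnorm_ge0 y; nra.
Qed.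

Lemma cnorm_mid_le1 x y :
  cnorm x <= 1 -> cnorm y <= 1 -> cnorm (csc Chalf (x ⊕ y)) <= 1.
Proof.
move=> hx hy; rewrite cnorm_real_scale Rabs_right; last lra.
by have := cnormD x y; lra.
Qed.
End AlgebraBasics.

HB.instance Definition _ (A : CStarAlgebra) :=
  Monoid.isComLaw.Build (car A) (cz A) (@cadd A) (@caddA A) (@caddC A) (@cadd0 A).

Section BigSums.
Variables (A : CStarAlgebra) (I : finType) (P : pred I) (F : I -> A).

Lemma sum_cmull (y : A) :
  (\big[@cadd A / cz A]_(i | P i) F i) ⊗ y = \big[@cadd A / cz A]_(i | P i) (F i ⊗ y).
Proof.
by apply: (big_morph (fun x : A => x ⊗ y)); [move=> a b; rewrite cmulDl | rewrite cmul0r].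
Qed.

Lemma sum_cmulr (y : A) :
  y ⊗ (\big[@cadd A / cz A]_(i | P i) F i) = \big[@cadd A / cz A]_(i | P i) (y ⊗ F i).
Proof.
by apply: (big_morph (fun x : A => y ⊗ x)); [move=> a b; rewrite cmulDr | rewrite cmulr0].
Qed.
End BigSums.

(* Formal linear combinations of three fixed elements, so that identities in
   the algebra reduce to identities between their coefficients. *)
Section LinearCombinations.
Variable A : CStarAlgebra.

Definition lin3 (x y z : A) (a b c : Cpx) : A := csc a x ⊕ csc b y ⊕ csc c z.

Lemma lin3_add x y z a b c a' b' c' :
  lin3 x y z a b c ⊕ lin3 x y z a' b' c' =
  lin3 x y z (Cadd a a') (Cadd b b') (Cadd c c').
Proof. by rewrite /lin3 !cscDl cadd4; congr (_ ⊕ _); rewrite cadd4. Qed.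

Lemma lin3_scale x y z s a b c :
  csc s (lin3 x y z a b c) = lin3 x y z (Cmul s a) (Cmul s b) (Cmul s c).
Proof. by rewrite /lin3 !cscDr !cscA. Qed.
End LinearCombinations.

(* If Q + r k and Q - r k both lie in the unit ball for some
   real r > 0, then k = 0.  Writing pt c = Q + c k, the identity
   ((pt a)^2 + (pt b)^2) / 2 = pt (a + b) for a^2 + b^2 = 0, together with the
   C*-identity, shows that the set of admissible c is stable under doubling;
   since ||c k|| <= 1 + ||Q|| on that set, k must vanish. *)
Section ExtremePoint.
Variables (A : CStarAlgebra) (Q k : A).
Hypotheses (Q_sa : cstar Q = Q) (Q_idem : Q ⊗ Q = Q) (k_sa : cstar k = k)
  (Qk : Q ⊗ k = k) (kQ : k ⊗ Q = k).
Local Open Scope R_scope.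

Definition pt (c : Cpx) : A := Q ⊕ csc c k.
Definition in_ball (c : Cpx) : Prop := cnorm (pt c) <= 1.

Lemma pt_lin3 c : pt c = lin3 Q k (k ⊗ k) Defs.C1 c Defs.C0.
Proof. by rewrite /pt /lin3 csc1 csc0 cadd0r. Qed.

Lemma pt_mul a b :
  pt a ⊗ pt b = lin3 Q k (k ⊗ k) Defs.C1 (Cadd a b) (Cmul a b).
Proof.
rewrite /pt /lin3 cmulDl !cmulDr !cmulZl !cmulZr -!cscA Q_idem Qk kQ.
rewrite csc1 cscDl !caddA; congr (_ ⊕ _); rewrite -!caddA; congr (_ ⊕ _); exact: caddC.
Qed.

Lemma pt_star c : cstar (pt c) = pt (Cconj c).
Proof. by rewrite /pt cstarD cstarZ Q_sa k_sa. Qed.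

(* Midpoint step: if a^2 + b^2 = 0 then pt (a + b) is the average of the
   squares of pt a and pt b. *)
Lemma in_ball_mid a b c : Cadd a b = c -> Cadd (Cmul a a) (Cmul b b) = Defs.C0 ->
  in_ball a -> in_ball b -> in_ball c.
Proof.
move=> <- sq0 ha hb; rewrite /in_ball.
have -> : pt (Cadd a b) = csc Chalf (pt a ⊗ pt a ⊕ pt b ⊗ pt b).
  rewrite !pt_mul lin3_add lin3_scale pt_lin3 sq0.
  by congr lin3; cpx_eq.
by apply: cnorm_mid_le1; apply: cnorm_mul_le1.
Qed.

(* The C*-identity turns the real points t and -t into the imaginary point i t:
   (pt (i t))^* pt (i t) = ((pt t)^2 + (pt (-t))^2) / 2. *)
Lemma in_ball_imag t :
  in_ball (MkC t 0) -> in_ball (MkC (-t) 0) -> in_ball (MkC 0 t).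
Proof.
move=> h1 h2; set y := pt (MkC 0 t).
have yy : cstar y ⊗ y =
    csc Chalf (pt (MkC t 0) ⊗ pt (MkC t 0) ⊕ pt (MkC (-t) 0) ⊗ pt (MkC (-t) 0)).
  by rewrite /y pt_star !pt_mul lin3_add lin3_scale; congr lin3; cpx_eq.
have : cnorm y * cnorm y <= 1.
  by rewrite -cnorm_cstar yy; apply: cnorm_mid_le1; apply: cnorm_mul_le1.
by rewrite /in_ball -/y; have := cnorm_ge0 y; nra.
Qed.

(* Doubling: from c, i c and -i c one reaches (1+i)c and (1-i)c, whose
   squares cancel, hence 2c. *)
Lemma in_ball_double x y : in_ball (MkC x y) -> in_ball (MkC (-y) x) ->
  in_ball (MkC y (-x)) -> in_ball (MkC (2 * x) (2 * y)).
Proof.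
move=> h1 h2 h3.
have h4 : in_ball (MkC (x - y) (x + y)) by apply: (in_ball_mid _ _ h1 h2); cpx_eq.
have h5 : in_ball (MkC (x + y) (y - x)) by apply: (in_ball_mid _ _ h1 h3); cpx_eq.
by apply: (in_ball_mid _ _ h4 h5); cpx_eq.
Qed.

Definition in_ball_cross (t : R) : Prop :=
  [/\ in_ball (MkC t 0), in_ball (MkC (-t) 0), in_ball (MkC 0 t) & in_ball (MkC 0 (-t))].

Lemma in_ball_cross_double t : in_ball_cross t -> in_ball_cross (2 * t).
Proof.
case=> h1 h2 h3 h4; split.
- have := @in_ball_double t 0; rewrite Ropp_0 Rmult_0_r; exact.
- have := @in_ball_double (-t) 0; rewrite Ropp_0 Rmult_0_r Ropp_mult_distr_r.
  by apply; rewrite ?Ropp_involutive.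
- have := @in_ball_double 0 t; rewrite Ropp_0 Rmult_0_r; exact.
- have := @in_ball_double 0 (-t); rewrite Ropp_0 Rmult_0_r Ropp_mult_distr_r.
  by apply; rewrite ?Ropp_involutive.
Qed.

Lemma in_ball_bound t : 0 <= t -> in_ball (MkC t 0) -> t * cnorm k <= 1 + cnorm Q.
Proof.
move=> t0 h.
have -> : t * cnorm k = cnorm (pt (MkC t 0) ⊕ copp Q).
  by rewrite /pt caddC caddA caddN cadd0 cnorm_real_scale Rabs_right //; lra.
by have := cnormD (pt (MkC t 0)) (copp Q); rewrite cnormN /in_ball in h *; lra.
Qed.

Lemma extreme_point r :
  0 < r -> in_ball (MkC r 0) -> in_ball (MkC (-r) 0) -> k = cz A.
Proof.
move=> r0 hr hnr.
have cross_pow n : in_ball_cross (2 ^ n * r).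
  elim: n => [|n IH]; last by rewrite /= Rmult_assoc; apply: in_ball_cross_double.
  rewrite /= Rmult_1_l; split=> //; apply: in_ball_imag; rewrite ?Ropp_involutive //.
have bound n : 2 ^ n * r * cnorm k <= 1 + cnorm Q.
  case: (cross_pow n) => h _ _ _; apply: in_ball_bound h.
  by apply: Rmult_le_pos; [apply: pow_le|]; lra.
have rk0 : r * cnorm k = 0.
  apply: (pow2_mul_bounded (b := 1 + cnorm Q)); first by have := cnorm_ge0 k; nra.
  by move=> n; rewrite -Rmult_assoc.
by apply: cnorm_eq0; apply: (Rmult_eq_reg_l r); lra.
Qed.

(* Indeed, for r = 1/(n+1),
   Q + r k = r Q + r (n Q + k) and Q - r k = (1 - r) Q + r (Q - k). *)
Lemma corner_vanish (n : nat) : cnorm (Q ⊕ copp k) <= 1 ->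
  cnorm (csc (MkC (INR n) 0) Q ⊕ k) <= INR n -> k = cz A.
Proof.
move=> h_minus h_plus; have n0 := pos_INR n; have Q1 := proj_norm_le1 Q_sa Q_idem.
set r := / (INR n + 1).
have r0 : 0 < r by apply: Rinv_0_lt_compat; lra.
have r1 : r * (INR n + 1) = 1 by rewrite /r Rinv_l //; lra.
apply: (extreme_point r0).
- rewrite /in_ball.
  have -> : pt (MkC r 0) = csc (MkC r 0) Q ⊕ csc (MkC r 0) (csc (MkC (INR n) 0) Q ⊕ k).
    rewrite /pt cscDr -cscA caddA -cscDl -{1}(csc1 Q).
    by congr (csc _ Q ⊕ _); rewrite /Cadd /Cmul /Defs.C1 /=; apply: Cpx_eq; lra.
  have := cnormD (csc (MkC r 0) Q) (csc (MkC r 0) (csc (MkC (INR n) 0) Q ⊕ k)).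
  rewrite !cnorm_real_scale Rabs_right; nra.
- rewrite /in_ball.
  have -> : pt (MkC (-r) 0) = csc (MkC (1 - r) 0) Q ⊕ csc (MkC r 0) (Q ⊕ copp k).
    rewrite /pt coppE cscDr -!cscA caddA -cscDl -{1}(csc1 Q).
    by congr (csc _ Q ⊕ csc _ k); cpx_eq.
  have := cnormD (csc (MkC (1 - r) 0) Q) (csc (MkC r 0) (Q ⊕ copp k)).
  rewrite !cnorm_real_scale (Rabs_right r) ?Rabs_right; nra.
Qed.
End ExtremePoint.

Section SumBound.
Local Open Scope R_scope.

Lemma sum_dist_le (A : CStarAlgebra) (I : finType) (P : pred I) (F : I -> A) (x : A) :
  (forall l, P l -> cnorm (x ⊕ copp (F l)) <= 1) ->
  cnorm (csc (MkC (INR (\sum_(l | P l) 1)%N) 0) x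
         ⊕ copp (\big[@cadd A / cz A]_(l | P l) F l))
    <= INR (\sum_(l | P l) 1)%N.
Proof.
move=> hF; apply: (big_ind2 (fun (m : nat) y =>
  cnorm (csc (MkC (INR m) 0) x ⊕ copp y) <= INR m)).
- by rewrite -[MkC _ _]/Defs.C0 csc0 cadd0 cnormN cnorm0 /=; lra.
- move=> m1 y1 m2 y2 h1 h2.
  have -> : csc (MkC (INR (m1 + m2)%N) 0) x ⊕ copp (y1 ⊕ y2) =
      (csc (MkC (INR m1) 0) x ⊕ copp y1) ⊕ (csc (MkC (INR m2) 0) x ⊕ copp y2).
    rewrite cadd4 -cscDl !coppE -cscDr plus_INR.
    by congr (csc _ _ ⊕ _); rewrite /Cadd /=; apply: Cpx_eq; ring.
  by rewrite plus_INR; have := cnormD (csc (MkC (INR m1) 0) x ⊕ copp y1)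
    (csc (MkC (INR m2) 0) x ⊕ copp y2); lra.
- by move=> l Pl; rewrite /= csc1; apply: hF.
Qed.
End SumBound.

(* For Q = p b the
   compressions h l = Q (p l) Q sum to Q and satisfy h b = Q, so the
   remaining ones sum to 0; each Q - h l = Q (1 - p l) Q lies in the unit ball,
   whence h d = - (sum of n others) satisfies ||n Q + h d|| <= n, and
   [corner_vanish] gives h d = 0, i.e. (p d Q)^* (p d Q) = 0. *)
Section PartitionOfUnity.
Variables (A : CStarAlgebra) (I : finType) (p : I -> A).
Local Open Scope R_scope.
Hypotheses (p_sa : forall l, cstar (p l) = p l) (p_idem : forall l, p l ⊗ p l = p l)
  (p_sum : \big[@cadd A / cz A]_(l : I) p l = co A).

Lemma partition_orth b d : b != d -> p d ⊗ p b = cz A.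
Proof.
move=> bd; set Q := p b; pose h l := Q ⊗ p l ⊗ Q.
have defect l : cnorm (Q ⊕ copp (h l)) <= 1.
  have -> : Q ⊕ copp (h l) = Q ⊗ (co A ⊕ copp (p l)) ⊗ Q.
    by rewrite /h !coppE cmulDr cmul1r cmulDl cmulZr cmulZl p_idem.
  have [c_sa c_idem] := compl_proj (p_sa l) (p_idem l).
  apply: cnorm_mul_le1; first apply: cnorm_mul_le1;
    by apply: proj_norm_le1; rewrite ?p_sa ?p_idem.
have others : \big[@cadd A / cz A]_(l | l != b) h l = cz A.
  have : \big[@cadd A / cz A]_(l : I) h l = Q.
    by rewrite /h -sum_cmull -sum_cmulr p_sum cmul1r p_idem.
  rewrite (bigD1 b) //= /h !p_idem -/Q => e.
  by apply: (@caddI _ Q); rewrite cadd0r.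
have hd0 : h d = cz A.
  pose M := \big[@cadd A / cz A]_(l | (l != b) && (l != d)) h l.
  have hdM : h d = copp M.
    move: others; rewrite (bigD1 d) 1?eq_sym //= -/M => e.
    by apply: (@caddI _ M); rewrite caddC e caddC caddN.
  have Q_sa : cstar Q = Q by apply: p_sa.
  have Q_idem : Q ⊗ Q = Q by apply: p_idem.
  apply: (@corner_vanish _ Q (h d) Q_sa Q_idem _ _ _ (\sum_(l | (l != b) && (l != d)) 1)%N).
  - by rewrite /h !cstarM Q_sa p_sa cmulA.
  - by rewrite /h !cmulA Q_idem.
  - by rewrite /h -cmulA Q_idem.
  - exact: defect.
  - by rewrite hdM; apply: sum_dist_le => l _; apply: defect.
apply: cstar_mul_eq0.
by rewrite cstarM !p_sa -cmulA (cmulA (p d)) p_idem cmulA; exact: hd0.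
Qed.
End PartitionOfUnity.

Section GraphDistance.
Variables (T : finType) (e : rel T).

Lemma walkS_r n x y : walk e n.+1 x y = [exists z, walk e n x z && e z y].
Proof.
elim: n x => [|n IH] x.
  apply/existsP/existsP => [[z /andP[xz /eqP <-]]|[z /andP[/eqP <- xy]]].
  - by exists x; rewrite /= eqxx.
  - by exists y; rewrite xy /=.
have -> : walk e n.+2 x y = [exists z, e x z && walk e n.+1 z y] by [].
apply/existsP/existsP => [[z /andP[xz]]|[w /andP[]]].
  rewrite IH => /existsP[w /andP[zw wy]].
  by exists w; rewrite wy andbT; apply/existsP; exists z; rewrite xz.
move=> /existsP[z /andP[xz zw]] wy.
by exists z; rewrite xz IH; apply/existsP; exists w; apply/andP; split.
Qed.

Lemma walk_gdist_le n x y : walk e n x y -> gdist e x y <= n.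
Proof.
move=> w; rewrite leqNgt; apply/negP => lt.
have := find_size (fun k => walk e k x y) (iota 0 #|T|).
rewrite size_iota => hs.
by have := before_find 0 lt; rewrite nth_iota ?add0n ?w //; apply: leq_trans hs.
Qed.

Lemma path_walk x s : path e x s -> walk e (size s) x (last x s).
Proof.
elim: s x => [|y s IH] x /=; first by rewrite eqxx.
by move=> /andP[xy ys]; apply/existsP; exists y; rewrite xy IH.
Qed.

Hypothesis e_sym : symmetric e.

Lemma walk_sym n x y : walk e n x y = walk e n y x.
Proof.
elim: n x y => [|n IH] x y; first by rewrite /= eq_sym.
by rewrite walkS_r; apply: eq_existsb => z; rewrite IH e_sym andbC.
Qed.

Lemma gdist_sym x y : gdist e x y = gdist e y x.
Proof. by apply: eq_find => n; rewrite walk_sym. Qed.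

Hypothesis e_conn : forall x y : T, connect e x y.

(* In a connected graph the distance is realized by a walk, since a shortest
   (duplicate-free) path has fewer than #|T| steps. *)
Lemma gdist_walk x y : walk e (gdist e x y) x y.
Proof.
have has_walk : has (fun n => walk e n x y) (iota 0 #|T|).
  have /connectP[s xs ->] := e_conn x y.
  have [s' xs' uniq_s' _] := shortenP xs.
  apply/hasP; exists (size s'); last exact: path_walk.
  by rewrite mem_iota add0n; have := max_card (mem (x :: s')); rewrite (card_uniqP uniq_s').
have := nth_find 0 has_walk; rewrite nth_iota ?add0n //.
by move: has_walk; rewrite has_find size_iota.
Qed.
End GraphDistance.

Lemma qaut_rel_transpose (T : finType) (e : rel T) (A : CStarAlgebra) (u : T -> T -> A) :
  qaut_rel e u -> qaut_rel e (fun i j => u j i).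
Proof.
case=> proj [sums adj]; split; last split.
- by move=> i j; apply: proj.
- by move=> i; have [row col] := sums i; split.
- by move=> i j k l ne; apply: adj; rewrite eq_sym.
Qed.

(* Distance preservation: u_ab u_cd = 0 whenever d(a,c) <> d(b,d).  This
   follows by induction on the walk length from the row orthogonality and the
   adjacency relation (R3). *)
Section DistancePreservation.
Variables (T : finType) (e : rel T).
Hypothesis e_conn : forall x y : T, connect e x y.

Lemma walk_orth (A : CStarAlgebra) (u : T -> T -> A) (Hu : qaut_rel e u) n a b c d :
  walk e n a c -> ~~ walk e n b d -> u a b ⊗ u c d = cz A.
Proof.
case: Hu => proj [sums adj].
elim: n a b c d => [|n IH] a b c d /=.
  move=> /eqP <- bd; apply: (@partition_orth _ _ (u a)) => //.
  - by move=> l; case: (proj a l).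
  - by move=> l; case: (proj a l).
  - by case: (sums a).
  - by rewrite eq_sym.
move=> /existsP[z /andP[az zc]] no_bd.
have [row _] := sums z.
rewrite -(cmul1r (u a b)) -row sum_cmulr sum_cmull; apply: big1 => y _.
case by_edge: (e b y).
  have no_yd : ~~ walk e n y d.
    by apply: contra no_bd => yd; apply/existsP; exists y; rewrite by_edge.
  by rewrite -cmulA (IH z y c d) // cmulr0.
have [-> _] : u a b ⊗ u z y = cz A /\ u z y ⊗ u a b = cz A.
  by apply: adj; rewrite az by_edge.
by rewrite cmul0r.
Qed.

Lemma dist_orth (A : CStarAlgebra) (u : T -> T -> A) (Hu : qaut_rel e u) a b c d :
  gdist e a c != gdist e b d -> u a b ⊗ u c d = cz A.
Proof.
move=> ne; case: ltngtP ne => // lt _.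
- apply: (walk_orth Hu (gdist_walk e_conn a c)).
  by apply/negP => /walk_gdist_le; rewrite leqNgt lt.
- apply: (walk_orth (qaut_rel_transpose Hu) (gdist_walk e_conn b d)).
  by apply/negP => /walk_gdist_le; rewrite leqNgt lt.
Qed.
End DistancePreservation.

Section Sandwich.
Variables (T : finType) (e : rel T).
Hypotheses (e_sym : symmetric e) (e_conn : forall x y : T, connect e x y).
Variables (A : CStarAlgebra) (u : T -> T -> A).
Hypothesis Hu : qaut_rel e u.

Let dist_orth := dist_orth e_conn Hu.

(* u_ij u_aq u_ip = 0 when d(j,q) <> d(q,p): either d(i,a) <> d(j,q) kills the
   left product, or d(a,i) = d(j,q) <> d(q,p) kills the right one. *)
Lemma triple_eq0 i j a q p : gdist e j q != gdist e q p -> u i j ⊗ u a q ⊗ u i p = cz A.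
Proof.
move=> jq_qp; case: (eqVneq (gdist e i a) (gdist e j q)) => [ia_jq | ia_jq].
  by rewrite -cmulA dist_orth ?cmulr0 // gdist_sym // ia_jq.
by rewrite dist_orth ?cmul0r.
Qed.

Lemma level_sum k a q s :
  \big[@cadd A / cz A]_(t | gdist e t q == s) (u k t ⊗ u a q) =
  if gdist e k a == s then u a q else cz A.
Proof.
have [row _] := Hu.2.1 k.
case: ifP => [/eqP ka | ka].
  rewrite big_rmcond => [|t tq]; first by rewrite -sum_cmull row cmul1l.
  by rewrite dist_orth // ka eq_sym.
by apply: big1 => t /eqP tq; rewrite dist_orth // tq ka.
Qed.

(* The heart of Lemma 3.7: inserting 1 = sum_a u_aq, the level sum collapses
   to sum over a of u_ij u_aq u_ip, each of which vanishes. *)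
Lemma sandwich_level_sum i j k p q s : gdist e j q != gdist e q p ->
  \big[@cadd A / cz A]_(t | gdist e t q == s) (u i j ⊗ u k t ⊗ u i p) = cz A.
Proof.
move=> jq_qp; have [_ col] := Hu.2.1 q.
under eq_bigr => t _ do
  rewrite -[u k t]cmul1r -col sum_cmulr sum_cmulr sum_cmull.
rewrite exchange_big; apply: big1 => a _.
rewrite -sum_cmull -sum_cmulr level_sum.
by case: ifP => _; [exact: triple_eq0 | rewrite cmulr0 cmul0r].
Qed.

Lemma sandwich_support i j k p (P : pred T) :
  \big[@cadd A / cz A]_(t | [&& gdist e t j == gdist e i k,
                                gdist e t p == gdist e i k & P t]) (u i j ⊗ u k t ⊗ u i p) =
  \big[@cadd A / cz A]_(t | P t) (u i j ⊗ u k t ⊗ u i p).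
Proof.
rewrite big_mkcond [RHS]big_mkcond; apply: eq_bigr => t _.
case: (P t); rewrite ?andbF ?andbT //.
case: eqVneq => [_ | tj]; last by rewrite dist_orth ?cmul0r // eq_sym gdist_sym.
case: eqVneq => [_ | tp] //.
by rewrite -cmulA dist_orth ?cmulr0 // gdist_sym // eq_sym.
Qed.
End Sandwich.

Theorem lemma3p7 (T : finType) (e : rel T)
  (e_sym : symmetric e) (e_irr : irreflexive e)
  (e_conn : forall x y : T, connect e x y)
  (A : CStarAlgebra) (u : T -> T -> A) (Hu : qaut_rel e u)
  (i j k l p q : T) (m s : nat)
  (Hik : gdist e i k = m) (Hjl : gdist e j l = m)
  (Hpj : p != j) (Hpl : gdist e p l = m)
  (Hql : gdist e q l = s) (Hjq : gdist e j q != gdist e q p) :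
  cmul (cmul (u i j)
          (\big[@cadd A / cz A]_(t : T | [&& gdist e t j == m,
                                               gdist e t p == m & gdist e t q == s])
              u k t))
       (u i p) = cz A
  /\
  ((forall t : T, [&& gdist e t q == s, gdist e t j == m & gdist e t p == m] = (t == l)) ->
   cmul (cmul (u i j) (u k l)) (u i p) = cz A).
Proof.
have level_sum_eq0 :
    cmul (cmul (u i j)
       (\big[@cadd A / cz A]_(t : T | [&& gdist e t j == m,
                                            gdist e t p == m & gdist e t q == s])
           u k t)) (u i p) = cz A.
  rewrite sum_cmulr sum_cmull -Hik (sandwich_support e_sym e_conn Hu).
  exact: (sandwich_level_sum e_sym e_conn Hu).
split=> // l_unique; rewrite -{}level_sum_eq0.
congr (_ ⊗ _ ⊗ _); apply/esym/big_pred1 => t /=.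
by rewrite -l_unique andbA andbC.
Qed.
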